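(* Fix integers $k,l\geq 2$, $m\ge 1$, $a\in\mathbb{Z}$, a polynomial $R(x_1,\dots,x_m)\in\mathbb{Z}[x_1,\dots,x_m]$, and integers $0\le s\le r$ with $r\ge1$. Let $P(x)=(x-a)^e\prod_{j=1}^t P_j(x)^{e_j}\in\mathbb{Z}[x]$ with $e\geq1$, $e_j\ge1$, where $P_1,\dots,P_t\in\mathbb{Z}[x]$ are distinct irreducible polynomials. Then the equation $$P(x)=\prod_{i=1}^s n_i!\cdot\prod_{i=s+1}^r n_i!!$$ has only finitely many solutions $(n_1,\dots,n_r,x)$ with $n_1,\dots,n_r$ positive integers and $x\in S_{a,R}$.
   Context: For a positive integer $x=\prod_{i\in I}p_i^{\alpha_i}$, $K(x)=\max_{i\in I}\alpha_i$ (with $K(1)=0$) and $\omega(x)=|I|$. $\mathcal{F}_k=\{x\in\mathbb{N}: K(x)<k\}$, $\mathcal{P}_l=\{x\in\mathbb{N}:\omega(x)<l\}$, and $\mathcal{F}_k\mathcal{P}_l=\{yz: y\in\mathcal{F}_k, z\in\mathcal{P}_l\}$. $S_{a,R}=\{x_1\cdots x_m\cdot R(x_1,\dots,x_m)+a : x_1,\dots,x_m\in\mathcal{F}_k\mathcal{P}_l\}$. $n!!$ is the double factorial. *)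

From HB Require Import structures.
From mathcomp Require Import all_boot all_order all_algebra.
From mathcomp Require Import mpoly.
Set Implicit Arguments. Unset Strict Implicit. Unset Printing Implicit Defensive.
Import Order.TTheory GRing.Theory Num.Theory.

Definition Kexp (x : nat) : nat := \max_(p <- primes x) logn p x.
Definition omega (x : nat) : nat := size (primes x).

Definition inF (k x : nat) : Prop := 0 < x /\ Kexp x < k.
Definition inP (l x : nat) : Prop := 0 < x /\ omega x < l.
Definition inFP (k l x : nat) : Prop :=
  exists y z, inF k y /\ inP l z /\ x = y * z.

Definition inS (k l m : nat) (a : int) (R : {mpoly int[m]}) (x : int) : Prop :=
  exists v : 'I_m -> nat, (forall i, inFP k l (v i)) /\
    x = ((\prod_(i < m) (v i)%:Z) * R.@[fun i => (v i)%:Z] + a)%R.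

Fixpoint dfact (n : nat) : nat :=
  match n with
  | 0 => 1
  | 1 => 1
  | (n'.+2) as n0 => n0 * dfact n'
  end.

Definition irreducible_Zx (p : {poly int}) : Prop :=
  p != 0%R /\ p \isn't a GRing.unit /\
  forall q r : {poly int}, p = (q * r)%R -> q \is a GRing.unit \/ r \is a GRing.unit.

From HB Require Import structures.
From mathcomp Require Import all_boot all_order all_algebra.
From mathcomp Require Import mpoly.
From mathcomp Require Import zify.
Import Order.TTheory GRing.Theory Num.Theory.

(* Only the factor x - a of P matters: it divides P(x) = M, the product of
   factorials and double factorials.  With N = max n_i, M divides (N!)^r and
   M >= (N/2)!.  Write x - a = V R(v) with V = v_1 ... v_m and v_i = y_i z_i,
   y_i in F_k, z_i in P_l.  As V divides (N!)^r, every prime factor of y_i is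
   at most N, so y_i <= primorial(N)^(k-1) <= 4^(N(k-1)) by Chebyshev's bound;
   and z_i is a product of fewer than l prime powers dividing (N!)^r, each at
   most 2^(rN) by Legendre's formula.  So V <= c^N, and |P(x)| <= C V^K gives
   (N/2)! <= M <= C c^(KN), which bounds N; then |x - a| <= M <= (N!)^r is
   bounded too. *)

Lemma leq_wexp2r {m n} e : m <= n -> m ^ e <= n ^ e.
Proof. by move=> le_mn; elim: e => // e IH; rewrite !expnS leq_mul. Qed.

Lemma dvdn_prod_cond (I : Type) (r : seq I) (P : pred I) (F : I -> nat) :
  \prod_(i <- r | P i) F i %| \prod_(i <- r) F i.
Proof. by rewrite [X in _ %| X](bigID P) /= dvdn_mulr. Qed.

Lemma coprime_prodl (I : Type) (r : seq I) (P : pred I) (F : I -> nat) m :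
  (forall i, P i -> coprime (F i) m) -> coprime (\prod_(i <- r | P i) F i) m.
Proof.
move=> coF; elim/big_ind: _ => //; first exact: coprime1n.
by move=> u v cu cv; rewrite coprimeMl cu cv.
Qed.

Lemma prime_dvd_fact p n : prime p -> p %| n`! -> p <= n.
Proof.
move=> pr_p; elim: n => [|n IH]; first by rewrite Euclid_dvd1.
rewrite factS Euclid_dvdM // => /orP[/dvdn_leq -> // | /IH]; exact: leqW.
Qed.

Lemma logn_fact_le p n : prime p -> p.-1 * logn p n`! <= n.
Proof.
move=> pr_p; have p_gt0 := prime_gt0 pr_p; rewrite logn_fact //.
suff tele j : p.-1 * (\sum_(1 <= i < j.+1) n %/ p ^ i) + n %/ p ^ j <= n.
  exact: leq_trans (leq_addr _ _) (tele n).
elim: j => [|j IH]; first by rewrite big_geq // muln0 expn0 divn1.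
have quot_step : n %/ p ^ j.+1 * p <= n %/ p ^ j.
  by rewrite expnSr divnMA leq_divM.
rewrite big_nat_recr //= mulnDr.
move: IH quot_step; set S := \sum_(_ <= _ < _) _; set q := n %/ p ^ j.+1.
rewrite -[in q * p](prednK p_gt0) mulnS; lia.
Qed.

Lemma pfactor_fact_le p n : prime p -> p ^ logn p n`! <= 2 ^ n.
Proof.
move=> pr_p; have p_gt0 := prime_gt0 pr_p.
have p_le : p <= 2 ^ p.-1 by rewrite -{1}(prednK p_gt0) ltn_expl.
apply: (leq_trans (leq_wexp2r _ p_le)).
by rewrite -expnM leq_pexp2l // logn_fact_le.
Qed.

Lemma bin_addS_le n m : 'C(n, m) + 'C(n, m.+1) <= 2 ^ n.
Proof.
elim: n m => [|n IH] [|m] //; rewrite expnS mul2n -addnn.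
  by have := IH 0; rewrite !bin0 binS bin0; lia.
by rewrite !binS; have := IH m; have := IH m.+1; lia.
Qed.

Lemma bin_mid_le m : 'C(m.*2.+1, m) <= 4 ^ m.
Proof.
have sym : 'C(m.*2.+1, m.+1) = 'C(m.*2.+1, m).
  by rewrite -bin_sub -addnn; [congr 'C(_, _); lia | lia].
have := bin_addS_le m.*2.+1 m.
by rewrite sym expnS -[4]/(2 ^ 2) -expnM mul2n; lia.
Qed.

Lemma prod_primes_dvd_bin_mid m :
  \prod_(m.+2 <= p < m.*2.+2 | prime p) p %| 'C(m.*2.+1, m).
Proof.
set Q := \prod_(_ <= p < _ | _) _.
have Q_dvd_fact : Q %| (m.*2.+1)`!.
  rewrite (@fact_split _ m.+1); last by lia.
  exact/dvdn_mull/dvdn_prod_cond.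
have Q_coprime : coprime Q (m`! * (m.*2.+1 - m)`!).
  rewrite coprimeMr; apply/andP; split; rewrite /Q big_nat_cond;
  apply: coprime_prodl => p /andP[p_range pr_p]; rewrite prime_coprime //;
  apply/negP => /(prime_dvd_fact _ _ pr_p); lia.
by rewrite -(Gauss_dvdl _ Q_coprime) bin_fact //; lia.
Qed.

Definition primorial N := \prod_(0 <= p < N.+1 | prime p) p.

Lemma primorial_le N : primorial N <= 4 ^ N.
Proof.
elim/ltn_ind: N => N IH.
case: N IH => [|K] IH; first by rewrite /primorial big_mkcond big_nat1.
have rec : primorial K.+1 = primorial K * (if prime K.+1 then K.+1 else 1).
  by rewrite /primorial big_mkcond big_nat_recr //= -big_mkcond.
have [pr_K1 | npr_K1] := boolP (prime K.+1); last first.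
  rewrite rec (negPf npr_K1) muln1.
  exact: leq_trans (IH K (ltnSn K)) (leq_pexp2l _ (leqnSn K)).
have [K1_2 | odd_K1] := even_prime pr_K1.
  by rewrite K1_2 /primorial big_mkcond !big_nat_recr //= big_geq.
have [m K1_eq] : exists m, K.+1 = m.*2.+1.
  exists K./2; have := odd_double_half K.
  by move: odd_K1 => /= /negbTE -> /=; rewrite add0n => ->.
have m_gt0 : 0 < m by case: m K1_eq pr_K1 => // ->.
rewrite K1_eq /primorial (@big_cat_nat _ _ _ m.+2) //=; last by lia.
have bin_gt0 : 0 < 'C(m.*2.+1, m) by rewrite bin_gt0; lia.
have low := IH m.+1 (_ : m.+1 < K.+1).
have high := leq_trans (dvdn_leq bin_gt0 (prod_primes_dvd_bin_mid m)) (bin_mid_le m).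
apply: (leq_trans (leq_mul (low _) high)); first by lia.
by rewrite -expnD leq_exp2l //; lia.
Qed.

Lemma prod_pfactor_primes y : 0 < y -> y = \prod_(p <- primes y) p ^ logn p y.
Proof. by move=> y_gt0; rewrite {1}(prod_prime_decomp y_gt0) prime_decompE big_map. Qed.

Lemma prod_primes_le_primorial y N :
  {in primes y, forall p, p <= N} -> \prod_(p <- primes y) p <= primorial N.
Proof.
move=> le_N.
have perm_primes : perm_eq (primes y) [seq p <- index_iota 0 N.+1 | p \in primes y].
  apply: uniq_perm; rewrite ?filter_uniq ?iota_uniq ?primes_uniq // => p.
  rewrite mem_filter mem_index_iota; case: (boolP (p \in primes y)) => //= /le_N.
  by rewrite ltnS.
rewrite (perm_big _ perm_primes) big_filter /primorial.
rewrite big_mkcond [X in _ <= X]big_mkcond; apply: leq_prod => p _.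
case: (boolP (p \in primes y)) => [|_]; first by rewrite mem_primes => /andP[->].
by case: ifP => // /prime_gt0.
Qed.

Lemma Kexp_le y N k :
  0 < y -> {in primes y, forall p, p <= N} -> Kexp y < k -> y <= 4 ^ (N * k.-1).
Proof.
move=> y_gt0 le_N y_K.
have logn_le p : p \in primes y -> logn p y <= k.-1.
  move=> p_y; have := @leq_bigmax_seq _ _ xpredT (logn^~ y) p p_y isT.
  rewrite -/(Kexp y); lia.
rewrite expnM; apply: (@leq_trans (primorial N ^ k.-1));
  last exact/leq_wexp2r/primorial_le.
apply: (@leq_trans ((\prod_(p <- primes y) p) ^ k.-1));
  last exact/leq_wexp2r/prod_primes_le_primorial.
have -> : (\prod_(p <- primes y) p) ^ k.-1 = \prod_(p <- primes y) p ^ k.-1.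
  by rewrite -natrXE -prodrXl.
rewrite {1}(prod_pfactor_primes _ y_gt0) big_seq [X in _ <= X]big_seq.
apply: leq_prod => p p_y; apply: leq_pexp2l (logn_le p p_y).
by move: p_y; rewrite mem_primes => /andP[/prime_gt0].
Qed.

Lemma omega_le z l B :
  0 < z -> (forall p, prime p -> p ^ logn p z <= B) -> omega z < l -> z <= B ^ l.-1.
Proof.
move=> z_gt0 le_B z_l.
have B_gt0 : 0 < B by apply: leq_trans (le_B 2 isT); rewrite expn_gt0.
rewrite {1}(prod_pfactor_primes _ z_gt0).
apply: (@leq_trans (\prod_(p <- primes z) B)).
  rewrite big_seq [X in _ <= X]big_seq; apply: leq_prod => p.
  by rewrite mem_primes => /andP[/le_B].
rewrite big_const_seq count_predT iter_muln muln1 leq_pexp2l //.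
by move: z_l; rewrite /omega; lia.
Qed.

Lemma inFP_dvd_fact_le k l r N v :
  inFP k l v -> v %| N`! ^ r -> v <= (4 ^ k.-1 * 2 ^ (r * l.-1)) ^ N.
Proof.
move=> [y [z [[y_gt0 y_K] [[z_gt0 z_l] ->]]]] v_dvd.
have y_dvd : y %| N`! ^ r := dvdn_trans (dvdn_mulr z (dvdnn y)) v_dvd.
have z_dvd : z %| N`! ^ r := dvdn_trans (dvdn_mull y (dvdnn z)) v_dvd.
rewrite expnMn -!expnM; apply: leq_mul.
  rewrite mulnC; apply: Kexp_le => // p; rewrite mem_primes => /and3P[pr_p _ p_y].
  have := dvdn_trans p_y y_dvd; rewrite Euclid_dvdX // => /andP[p_fact _].
  exact: prime_dvd_fact pr_p p_fact.
rewrite [r * _ * _]mulnC mulnA expnM; apply: omega_le => // p pr_p.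
have le_log : logn p z <= logn p (N`! ^ r).
  by apply: dvdn_leq_log z_dvd; rewrite expn_gt0 fact_gt0.
apply: (@leq_trans (p ^ logn p (N`! ^ r))); first by rewrite leq_pexp2l ?prime_gt0.
by rewrite lognX mulnC !expnM; exact/leq_wexp2r/pfactor_fact_le.
Qed.

Lemma dfact_mulSn n : dfact n.+1 * dfact n = n.+1`!.
Proof.
elim: n => [|n IH] //.
by rewrite [dfact n.+2]/= -mulnA [dfact n * _]mulnC IH factS.
Qed.

Lemma dfact_dvd_fact n : dfact n %| n`!.
Proof. by case: n => // n; rewrite -dfact_mulSn dvdn_mulr. Qed.

Lemma dfact_gt0 n : 0 < dfact n.
Proof. exact: dvdn_gt0 (fact_gt0 n) (dfact_dvd_fact n). Qed.

Lemma fact_half_le_dfact n : (n./2)`! <= dfact n.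
Proof.
elim/ltn_ind: n => -[|[|n]] IH //=.
rewrite factS leq_mul ?IH // ltnS (leq_trans (half_leq (leqnSn n))) //.
by rewrite leq_half_double; lia.
Qed.

Definition fact_dfact_prod {r} s (n : 'I_r -> nat) :=
  \prod_(i < r | i < s) (n i)`! * \prod_(i < r | s <= i) dfact (n i).

Lemma fact_dfact_prodE {r} s (n : 'I_r -> nat) :
  fact_dfact_prod s n = \prod_(i < r) (if i < s then (n i)`! else dfact (n i)).
Proof.
rewrite [RHS](bigID (fun i : 'I_r => i < s)) /=; congr (_ * _).
  by apply: eq_bigr => i ->.
by apply: eq_big => i; [rewrite -leqNgt | rewrite ltnNge => ->].
Qed.

Lemma fact_dfact_prod_gt0 {r} s (n : 'I_r -> nat) : 0 < fact_dfact_prod s n.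
Proof.
by rewrite fact_dfact_prodE prodn_gt0 // => i; case: ifP; rewrite ?fact_gt0 ?dfact_gt0.
Qed.

Lemma fact_dfact_prod_dvd {r} s (n : 'I_r -> nat) N :
  (forall i, n i <= N) -> fact_dfact_prod s n %| N`! ^ r.
Proof.
move=> le_N; rewrite fact_dfact_prodE -[r in _ ^ r]card_ord -prod_nat_const.
elim/big_ind2: _ => // [* | i _]; first exact: dvdn_mul.
have fact_dvd : (n i)`! %| N`! by rewrite (fact_split (le_N i)) dvdn_mulr.
by case: ifP => _; last exact: dvdn_trans (dfact_dvd_fact _) fact_dvd.
Qed.

Lemma fact_half_le_fact_dfact_prod {r} s (n : 'I_r -> nat) i :
  ((n i)./2)`! <= fact_dfact_prod s n.
Proof.
rewrite fact_dfact_prodE (bigD1 i) //=.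
apply: (@leq_trans (if i < s then (n i)`! else dfact (n i))).
  case: ifP => _; last exact: fact_half_le_dfact.
  by rewrite leq_fact // -{2}[n i]odd_double_half -addnn; lia.
by rewrite leq_pmulr // prodn_cond_gt0 // => j _; case: ifP; rewrite ?fact_gt0 ?dfact_gt0.
Qed.

Lemma expn_le_fact a t : a ^ t <= (a + t)`!.
Proof.
elim: t => [|t IH]; first by rewrite fact_gt0.
by rewrite addnS factS expnS leq_mul // ltnW // ltnS leq_addr.
Qed.

Lemma fact_le_geometric_bounded D E : exists J, forall j, j`! <= D * E ^ j -> j <= J.
Proof.
pose a := (E.+1).*2; exists (a + D * E.+1 ^ a) => j fact_le; rewrite leqNgt.
apply/negP => j_big; set t := j - a.
have j_eq : j = a + t by rewrite /t; lia.
have lower : 2 ^ t * E.+1 ^ t <= j`! by rewrite -expnMn mul2n j_eq expn_le_fact.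
have upper : D * E ^ j <= D * E.+1 ^ a * E.+1 ^ t.
  by rewrite -mulnA -expnD -j_eq leq_mul // leq_wexp2r.
have small : D * E.+1 ^ a < 2 ^ t by apply: leq_trans (ltn_expl t (ltnSn 1)); lia.
have : D * E.+1 ^ a * E.+1 ^ t < 2 ^ t * E.+1 ^ t by rewrite ltn_mul2r expn_gt0.
lia.
Qed.

Lemma half_fact_le_geometric_bounded D E :
  exists J, forall N, (N./2)`! <= D * E ^ N -> N <= J.
Proof.
have [J bounded] := fact_le_geometric_bounded (D * E.+1) (E.+1 ^ 2).
exists J.*2.+1 => N fact_le; rewrite -leq_half_double; apply: bounded.
apply: (leq_trans fact_le); rewrite -mulnA leq_mul // -expnM -expnS.
apply: (@leq_trans (E.+1 ^ N)); first exact: leq_wexp2r.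
by rewrite leq_pexp2l // mul2n -leq_half_double.
Qed.

Section NormBounds.
Local Open Scope ring_scope.
Context {R : realDomainType}.

Lemma horner_norm_le (p : {poly R}) (x : R) :
  `|p.[x]| <= (\sum_(i < size p) `|p`_i|) * (`|x| + 1) ^+ size p.
Proof.
rewrite horner_coef mulr_suml; apply: le_trans (ler_norm_sum _ _ _) _.
apply: ler_sum => i _; rewrite normrM normrX ler_wpM2l //.
apply: (@le_trans _ _ ((`|x| + 1) ^+ i)).
  by rewrite lerXn2r ?nnegrE ?addr_ge0 // lerDl.
by rewrite ler_weXn2l ?lerDr // ltnW.
Qed.

Lemma meval_norm_le n (p : {mpoly R[n]}) (w : 'I_n -> R) :
  (forall i, 1 <= w i) ->
  `|p.@[w]| <= (\sum_(m <- msupp p) `|p@_m|) * (\prod_i w i) ^+ msize p.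
Proof.
move=> w_ge1; have w_ge0 i : 0 <= w i := le_trans ler01 (w_ge1 i).
rewrite mevalE mulr_suml big_seq [X in _ <= X]big_seq.
apply: le_trans (ler_norm_sum _ _ _) _; apply: ler_sum => m m_supp.
rewrite normrM ler_wpM2l // -prodrXl normr_prod; apply: ler_prod => i _.
rewrite normr_ge0 normrX ger0_norm // ler_weXn2l //.
apply: leq_trans (msize_mdeg_lt m_supp).
by rewrite mdegE (bigD1 i) //= ltnW // ltnS leq_addr.
Qed.

Lemma norm_affine_le (V y a c : R) d :
  1 <= V -> `|y| <= c * V ^+ d -> `|V * y + a| <= (c + `|a|) * V ^+ d.+1.
Proof.
move=> V_ge1 y_le; have V_ge0 : 0 <= V := le_trans ler01 V_ge1.
rewrite mulrDl; apply: le_trans (ler_normD _ _) _; apply: lerD.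
  by rewrite normrM ger0_norm // exprS mulrCA ler_wpM2l.
by rewrite ler_peMr // exprn_ege1.
Qed.

Lemma horner_norm_le_pow (p : {poly R}) (x c V : R) d :
  1 <= V -> 0 <= c -> `|x| <= c * V ^+ d ->
  `|p.[x]| <= (\sum_(i < size p) `|p`_i|) * (c + 1) ^+ size p * V ^+ (d * size p).
Proof.
move=> V_ge1 c_ge0 x_le; apply: le_trans (horner_norm_le p x) _.
rewrite -mulrA exprM -exprMn ler_wpM2l ?sumr_ge0 // lerXn2r ?nnegrE ?addr_ge0 //.
  by rewrite mulr_ge0 ?addr_ge0 ?exprn_ge0 // (le_trans ler01).
by rewrite mulrDl mul1r lerD // exprn_ege1.
Qed.

End NormBounds.

Lemma half_fact_max_le_fact_dfact_prod {r} s (n : 'I_r -> nat) :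
  ((\max_i n i)./2)`! <= fact_dfact_prod s n.
Proof.
case: r n => [|r] n; first by rewrite big_ord0 fact_dfact_prodE big_ord0.
have [|i0 ->] := bigop.eq_bigmax n; first by rewrite card_ord.
exact: fact_half_le_fact_dfact_prod.
Qed.

Lemma prod_inFP_le {k l r m} {v : 'I_m -> nat} {N} :
  (forall i, inFP k l (v i)) -> \prod_i v i %| N`! ^ r ->
  \prod_i v i <= ((4 ^ k.-1 * 2 ^ (r * l.-1)) ^ m) ^ N.
Proof.
move=> v_FP V_dvd; set w := 4 ^ _ * _.
have -> : (w ^ m) ^ N = \prod_(i < m) w ^ N.
  by rewrite prod_nat_const card_ord -!expnM mulnC.
apply: leq_prod => i _; apply: inFP_dvd_fact_le (v_FP i) (dvdn_trans _ V_dvd).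
by rewrite (bigD1 i) //= dvdn_mulr.
Qed.

Lemma bounded_pairs_enum r (a : int) (Bn Bx : nat) :
  exists sols : seq ({ffun 'I_r -> nat} * int),
    forall (n : {ffun 'I_r -> nat}) (x : int),
      (forall i, n i <= Bn) -> absz (x - a) <= Bx -> (n, x) \in sols.
Proof.
pose ns := [seq [ffun i => g i : nat] : {ffun 'I_r -> nat}
            | g : {ffun 'I_r -> 'I_Bn.+1} <- enum {ffun 'I_r -> 'I_Bn.+1}].
pose xs := [seq (a + (j%:Z - Bx%:Z))%R | j <- iota 0 Bx.*2.+1].
exists [seq (f, y) | f <- ns, y <- xs] => n x n_le x_le; apply: allpairs_f.
  apply/mapP; exists [ffun i => inord (n i)]; first by rewrite mem_enum.
  by apply/ffunP => i; rewrite !ffunE inordK // ltnS.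
by apply/mapP; exists (absz (x - a + Bx%:Z)%R); rewrite ?mem_iota; lia.
Qed.

Section SolutionBound.
Local Open Scope ring_scope.
Variables (k l r s : nat).
Context {m : nat} {a : int} {P : {poly int}}.
Variable R : {mpoly int[m]}.
Hypothesis dvd_horner : forall x : int, (x - a %| P.[x])%Z.

Let SR : int := \sum_(mm <- msupp R) `|R@_mm|.
Let C : nat := absz ((\sum_(i < size P) `|P`_i|) * (SR + `|a| + 1) ^+ size P).
Let K := ((msize R).+1 * size P)%N.

Lemma absz_horner_le {v : 'I_m -> nat} {x : int} :
  (forall i, 0 < v i)%N -> x = (\prod_i (v i)%:Z) * R.@[fun i => (v i)%:Z] + a ->
  (absz P.[x] <= C * (\prod_i v i) ^ K)%N.
Proof.
move=> v_gt0 ->; set V := (\prod_i v i)%N.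
have V_eq : \prod_i (v i)%:Z = V%:Z by rewrite /V (big_morph Posz PoszM (erefl 1%:Z)).
rewrite V_eq.
have V_ge1 : 1 <= V%:Z by rewrite lez_nat prodn_gt0.
have R_le : `|R.@[fun i => (v i)%:Z]| <= SR * V%:Z ^+ msize R.
  by rewrite -V_eq; apply: meval_norm_le => i; rewrite lez_nat.
have SR_ge0 : 0 <= SR by apply: sumr_ge0.
have x_le := norm_affine_le _ _ a _ _ V_ge1 R_le.
have := horner_norm_le_pow P _ _ _ _ V_ge1 (addr_ge0 SR_ge0 (normr_ge0 a)) x_le.
have C_eq : C%:Z = (\sum_(i < size P) `|P`_i|) * (SR + `|a| + 1) ^+ size P.
  by rewrite /C gez0_abs // mulr_ge0 ?sumr_ge0 // exprn_ge0 // addr_ge0 ?addr_ge0.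
by rewrite -C_eq -abszE -!natz -natrX -natrM ler_nat.
Qed.

Lemma solution_half_fact_le {n : 'I_r -> nat} {x : int} :
  inS k l a R x -> P.[x] = (fact_dfact_prod s n)%:Z ->
  (((\max_i n i)./2)`! <= C * ((4 ^ k.-1 * 2 ^ (r * l.-1)) ^ (m * K)) ^ (\max_i n i))%N.
Proof.
move=> [v [v_FP x_eq]] Px; set N := \max_i n i.
have v_gt0 i : (0 < v i)%N.
  by have [y [z [[y_gt0 _] [[z_gt0 _] ->]]]] := v_FP i; rewrite muln_gt0 y_gt0.
have V_dvd : (\prod_i v i %| fact_dfact_prod s n)%N.
  have := dvd_horner x; rewrite /dvdz -topredE /= Px absz_nat x_eq addrK abszM.
  rewrite -(big_morph Posz PoszM (erefl 1%:Z)) absz_nat.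
  exact: dvdn_trans (dvdn_mulr _ (dvdnn _)).
have M_dvd : (fact_dfact_prod s n %| N`! ^ r)%N.
  by apply: fact_dfact_prod_dvd => i; apply: leq_bigmax.
have V_le := prod_inFP_le v_FP (dvdn_trans V_dvd M_dvd).
have := absz_horner_le v_gt0 x_eq; rewrite Px absz_nat => M_le.
apply: leq_trans (half_fact_max_le_fact_dfact_prod s n) (leq_trans M_le _).
rewrite leq_mul //; apply: leq_trans (leq_wexp2r K V_le) _.
by rewrite -!expnM mulnA mulnAC.
Qed.

Lemma solutions_max_bounded : exists N0, forall (n : 'I_r -> nat) (x : int),
  inS k l a R x -> P.[x] = (fact_dfact_prod s n)%:Z -> (\max_i n i <= N0)%N.
Proof.
have [N0 bounded] :=
  half_fact_le_geometric_bounded C ((4 ^ k.-1 * 2 ^ (r * l.-1)) ^ (m * K)).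
by exists N0 => n x xS Px; apply/bounded/(solution_half_fact_le xS Px).
Qed.

End SolutionBound.

Theorem theorem5 (k l m : nat) (a : int) (R : {mpoly int[m]}) (s r : nat)
  (e t : nat) (Pj : 'I_t -> {poly int}) (ej : 'I_t -> nat) :
  (2 <= k)%N -> (2 <= l)%N -> (1 <= m)%N ->
  (s <= r)%N -> (1 <= r)%N ->
  (1 <= e)%N -> (forall j, 1 <= ej j)%N ->
  (forall j, irreducible_Zx (Pj j)) -> injective Pj ->
  let P : {poly int} :=
    (('X - a%:P) ^+ e * \prod_(j < t) (Pj j) ^+ (ej j))%R in
  exists sols : seq ({ffun 'I_r -> nat} * int),
    forall (n : {ffun 'I_r -> nat}) (x : int),
      (forall i, 0 < n i)%N ->
      inS k l a R x ->
      (P.[x])%R = Posz (\prod_(i < r | (i < s)%N) (n i)`! *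
                \prod_(i < r | (s <= i)%N) dfact (n i))%N ->
      (n, x) \in sols.
Proof.
move=> _ _ _ _ _ e_gt0 _ _ _ P.
have dvd_horner (x : int) : ((x - a)%R %| (P.[x])%R)%Z.
  by rewrite hornerM horner_exp hornerXsubC -(prednK e_gt0) exprS -mulrA dvdz_mulr.
have [N0 max_le] := solutions_max_bounded k l r s R dvd_horner.
have [sols sols_ok] := bounded_pairs_enum r a N0 (N0`! ^ r).
exists sols => n x _ xS Px; have n_le i : n i <= N0.
  exact: leq_trans (leq_bigmax i) (max_le n x xS Px).
apply: sols_ok => //; have := dvd_horner x; rewrite /dvdz -topredE /= Px absz_nat.
move/(dvdn_leq (fact_dfact_prod_gt0 s n))/leq_trans; apply.
by apply: dvdn_leq; rewrite ?expn_gt0 ?fact_gt0 ?fact_dfact_prod_dvd.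
Qed.
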